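(* Let $\mathcal{C}$ be a simplicial complex on $[n]$, with $\mathcal{A}_{\mathcal{C}}$ indexed by $\{0,1\}$-vectors. Then the set \[K=\Big\{\sum_{\mathbf{j}\in\{0,1\}^S}(-1)^{\|\mathbf{j}\|_1}e_{\mathbf{i},\mathbf{j}} : S \text{ a minimal non-face of } \mathcal{C},\ \mathbf{i}\in\{0,1\}^{[n]\setminus S}\Big\}\] spans $\ker(\mathcal{A}_{\mathcal{C}})$. Furthermore, if $M'$ is the matrix whose columns are the elements of $K$, then multiplying a suitable set of rows and columns of $M'$ by $-1$ yields the matrix $M$ whose columns are the vectors $\sum_{\mathbf{j}\in\{0,1\}^S}e_{\mathbf{i},\mathbf{j}}$, for $S$ a minimal non-face of $\mathcal{C}$ and $\mathbf{i}\in\{0,1\}^{[n]\setminus S}$ (with columns indexed in the same way).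
   Context: A simplicial complex on $[n]$ is a family of subsets of $[n]$ closed under subsets; facets are inclusion-maximal faces; a minimal non-face is a subset of $[n]$ not in $\mathcal{C}$ all of whose proper subsets are in $\mathcal{C}$. Here $\mathcal{A}_{\mathcal{C}}$ is the $0/1$ matrix with columns indexed by $\mathbf{k}\in\{0,1\}^n$ and rows indexed by pairs $(F,\mathbf{e})$, $F$ a facet, $\mathbf{e}\in\{0,1\}^F$, with entry $1$ iff $\mathbf{e}=\mathbf{k}|_F$. For $S\subseteq[n]$, $\mathbf{j}\in\{0,1\}^S$ and $\mathbf{i}\in\{0,1\}^{[n]\setminus S}$, $e_{\mathbf{i},\mathbf{j}}\in\mathbb{R}^{\{0,1\}^n}$ is the standard basis vector at the index $\mathbf{k}$ with $\mathbf{k}|_S=\mathbf{j}$ and $\mathbf{k}|_{[n]\setminus S}=\mathbf{i}$. $\|\mathbf{j}\|_1$ is the number of ones in $\mathbf{j}$. *)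

From mathcomp Require Import all_boot all_order all_algebra.
Set Implicit Arguments. Unset Strict Implicit. Unset Printing Implicit Defensive.
Import Order.TTheory GRing.Theory Num.Theory.
Local Open Scope ring_scope.

(* Vertex set [n] = 'I_n.  A 0/1 vector indexed by [n] (or a subset of it) is a
   {ffun 'I_n -> bool}; a vector in {0,1}^F (F a subset of [n]) is represented
   by an ffun that is false outside F. *)
Notation bvec n := {ffun 'I_n -> bool}.

Definition simplicial_complex n (C : {set {set 'I_n}}) : Prop :=
  forall A B : {set 'I_n}, A \in C -> B \subset A -> B \in C.

Definition facet n (C : {set {set 'I_n}}) (F : {set 'I_n}) : Prop :=
  F \in C /\ forall G, G \in C -> F \subset G -> G = F.

Definition min_nonface n (C : {set {set 'I_n}}) (S : {set 'I_n}) : Prop :=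
  S \notin C /\ forall T : {set 'I_n}, T \proper S -> T \in C.

Definition supported_on n (F : {set 'I_n}) (e : bvec n) : Prop :=
  forall x, x \notin F -> e x = false.

(* entry of A_C at row (F,e) and column k : 1 iff e = k|_F *)
Definition AC_entry (R : realFieldType) n (F : {set 'I_n}) (e k : bvec n) : R :=
  if [forall x in F, e x == k x] then 1 else 0.

Definition in_ker_AC (R : realFieldType) n (C : {set {set 'I_n}})
  (v : bvec n -> R) : Prop :=
  forall (F : {set 'I_n}) (e : bvec n), facet C F -> supported_on F e ->
    \sum_(k : bvec n) AC_entry R F e k * v k = 0.

Definition e_ij (R : realFieldType) n (S : {set 'I_n}) (i j : bvec n) (k : bvec n) : R :=
  if [forall x, k x == (if x \in S then j x else i x)] then 1 else 0.

Definition norm1 n (j : bvec n) : nat := #|[set x | j x]|.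

(* index set of K and M: pairs (S,i), S a minimal non-face, i in {0,1}^([n]\S) *)
Definition gen_idx n (C : {set {set 'I_n}}) (g : {set 'I_n} * bvec n) : Prop :=
  min_nonface C g.1 /\ supported_on (~: g.1) g.2.

Definition gen_idxb n (C : {set {set 'I_n}}) (g : {set 'I_n} * bvec n) : bool :=
  [&& g.1 \notin C, [forall T : {set 'I_n}, (T \proper g.1) ==> (T \in C)]
    & [forall x, (x \in g.1) ==> ~~ g.2 x]].

Definition Kvec (R : realFieldType) n (S : {set 'I_n}) (i : bvec n) (k : bvec n) : R :=
  \sum_(j : bvec n | [forall x, (x \notin S) ==> ~~ j x])
     (-1) ^+ norm1 j * e_ij R S i j k.

Definition Mvec (R : realFieldType) n (S : {set 'I_n}) (i : bvec n) (k : bvec n) : R :=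
  \sum_(j : bvec n | [forall x, (x \notin S) ==> ~~ j x]) e_ij R S i j k.

From mathcomp Require Import all_boot all_order all_algebra.
From mathcomp Require Import lra zify.
Set Implicit Arguments. Unset Strict Implicit. Unset Printing Implicit Defensive.
Import Order.TTheory GRing.Theory Num.Theory.
Local Open Scope ring_scope.

(* For a non-face S, each facet F misses some x0 in S; toggling coordinate x0
   preserves every row (F, e) of A_C and negates the alternating vector, so that
   vector lies in the kernel.  Conversely, write k for a 0/1 vector with support
   ones k.  Rows whose support F is a facet show, by downward induction on
   |ones k|, that a kernel vector vanishing on every k with ones k a non-face is
   zero.  When ones k is a non-face, the alternating vector attached to a
   minimal non-face S below ones k and to k restricted off S takes the value +-1 at k and vanishes
   at every other k' with |ones k'| >= |ones k|: this triangularity lets one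
   express any vector, on non-face supports, as a combination of K.  Finally the
   alternating vector equals (-1)^|ones k| (-1)^|ones i| times the plain one. *)

Section Cube.
Variables (R : realFieldType) (n : nat).
Implicit Types (S F T : {set 'I_n}) (i j k : bvec n).

Definition ones k : {set 'I_n} := [set x | k x].

Lemma ones_inj : injective ones.
Proof. by move=> k k' /setP h; apply/ffunP => x; have := h x; rewrite !inE. Qed.

Definition agree_off S i k := [forall x, (x \notin S) ==> (k x == i x)].

Lemma sum_cube_e_ij S i k (f : bvec n -> R) :
  \sum_(j : bvec n | [forall x, (x \notin S) ==> ~~ j x]) f j * e_ij R S i j k =
  if agree_off S i k then f [ffun x => (x \in S) && k x] else 0.
Proof.
rewrite /agree_off; case: ifP => [/forallP agree | /negbT/forallPn [x0 /negP nx0]].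
  have cube_kS : [forall x, (x \notin S) ==> ~~ [ffun x => (x \in S) && k x] x].
    by apply/forallP => x; rewrite ffunE; case: (x \in S).
  rewrite (bigD1 _ cube_kS) /= big1 ?addr0.
    rewrite /e_ij; case: ifP; first by rewrite mulr1.
    move/negbT/forallPn => [x /negP []]; rewrite ffunE.
    by case: ifP => xS; rewrite ?xS //; have := agree x; rewrite xS.
  move=> j /andP [/forallP cube_j nj]; rewrite /e_ij; case: ifP; last by rewrite mulr0.
  move/forallP => kj; case/negP: nj; apply/eqP/ffunP => x; rewrite ffunE.
  by have := kj x; have := cube_j x; case: (x \in S) => /= [_ /eqP ->|/negbTE ->].
apply: big1 => j _; rewrite /e_ij; case: ifP; last by rewrite mulr0.
move/forallP => kj; case: nx0; apply/implyP => x0S.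
by have := kj x0; rewrite (negbTE x0S).
Qed.

Lemma KvecE S i k :
  Kvec R S i k = if agree_off S i k then (-1) ^+ #|S :&: ones k| else 0.
Proof.
rewrite /Kvec sum_cube_e_ij; case: ifP => // _; congr (_ ^+ _).
by apply: eq_card => x; rewrite !inE ffunE.
Qed.

Lemma MvecE S i k : Mvec R S i k = if agree_off S i k then 1 else 0.
Proof.
rewrite /Mvec -(sum_cube_e_ij S i k (fun _ => 1)).
by apply: eq_bigr => j _; rewrite mul1r.
Qed.

Lemma Kvec_sign_flip S i k : supported_on (~: S) i ->
  (-1) ^+ odd #|ones k| * (-1) ^+ odd #|ones i| * Kvec R S i k = Mvec R S i k.
Proof.
move=> iS; rewrite KvecE MvecE; case: ifP => [/forallP agree|_]; last by rewrite mulr0.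
have -> : ones i = ones k :\: S.
  apply/setP => x; rewrite !inE; case xS: (x \in S) => /=; first by rewrite iS ?inE ?xS.
  by have := agree x; rewrite xS /= => /eqP ->.
rewrite -(cardsID S (ones k)) setIC !signr_odd -!exprD.
set a := #|_ :&: _|; set b := #|_ :\: _|.
by rewrite (_ : (a + b + b + a = (a + b) * 2)%N) ?exprM ?sqrr_sign //; lia.
Qed.

Definition flip (x0 : 'I_n) k : bvec n :=
  [ffun y => if y == x0 then ~~ k y else k y].

Lemma flipK x0 : involutive (flip x0).
Proof.
by move=> k; apply/ffunP => y; rewrite !ffunE; case: eqP => // ->; rewrite negbK.
Qed.

Lemma AC_entry_flip F e x0 k :
  x0 \notin F -> AC_entry R F e (flip x0 k) = AC_entry R F e k.
Proof.
move=> x0F; rewrite /AC_entry; congr (if _ then _ else _); apply: eq_forallb => x.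
by rewrite ffunE; have [->|] := eqVneq x x0; rewrite ?(negbTE x0F).
Qed.

Lemma Kvec_flip S i x0 k : x0 \in S -> Kvec R S i (flip x0 k) = - Kvec R S i k.
Proof.
move=> x0S; rewrite !KvecE.
have -> : agree_off S i (flip x0 k) = agree_off S i k.
  by apply: eq_forallb => x; rewrite ffunE; have [->|] := eqVneq x x0; rewrite ?x0S.
case: ifP => _; last by rewrite oppr0.
case kx0: (k x0).
  have -> : S :&: ones (flip x0 k) = (S :&: ones k) :\ x0.
    by apply/setP => y; rewrite !inE ffunE; case: eqP => [->|]; rewrite ?kx0 ?andbF.
  by rewrite [in RHS](cardsD1 x0) !inE x0S kx0 /= exprS mulN1r opprK.
have -> : S :&: ones (flip x0 k) = x0 |: (S :&: ones k).
  by apply/setP => y; rewrite !inE ffunE; case: eqP => [->|]; rewrite ?kx0 ?x0S.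
by rewrite cardsU1 !inE kx0 andbF /= exprS mulN1r.
Qed.

Lemma sum_AC_entry_Kvec_eq0 S i F e : ~~ (S \subset F) ->
  \sum_(k : bvec n) AC_entry R F e k * Kvec R S i k = 0.
Proof.
case/subsetPn=> x0 x0S x0F; set s := \sum_k _.
have : s = - s.
  rewrite /s [LHS](reindex_inj (can_inj (flipK x0))) /= -sumrN.
  by apply: eq_bigr => k _; rewrite AC_entry_flip // Kvec_flip // mulrN.
by move=> h; lra.
Qed.

Variable C : {set {set 'I_n}}.

Lemma Kvec_in_ker S i : simplicial_complex C -> S \notin C -> in_ker_AC C (Kvec R S i).
Proof.
move=> sc SC F e [FC _] _; apply: sum_AC_entry_Kvec_eq0.
by apply/negP => SF; case/negP: SC; apply: sc SF.
Qed.

Lemma in_ker_AC_comb (I : finType) (P : pred I) (c : I -> R) (w : I -> bvec n -> R) :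
  (forall g, P g -> in_ker_AC C (w g)) ->
  in_ker_AC C (fun k => \sum_(g | P g) c g * w g k).
Proof.
move=> wker F e fF supp.
under eq_bigr => k _ do rewrite big_distrr.
rewrite exchange_big /= big1 // => g Pg.
under eq_bigr => k _ do rewrite mulrCA.
by rewrite -big_distrr /= wker // mulr0.
Qed.

Lemma in_ker_AC_sub (v w : bvec n -> R) :
  in_ker_AC C v -> in_ker_AC C w -> in_ker_AC C (fun k => v k - w k).
Proof.
move=> vker wker F e fF supp.
under eq_bigr => k _ do rewrite mulrBr.
by rewrite sumrB vker // wker // subrr.
Qed.

Lemma gen_idxP g : reflect (gen_idx C g) (gen_idxb C g).
Proof.
apply: (iffP and3P) => [[nS /forallP pr /forallP sp] | [[nS pr] sp]].
  split; first by split => // T pT; have := pr T; rewrite pT.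
  by move=> x; rewrite inE negbK => xS; have := sp x; rewrite xS => /negbTE.
split=> //; first by apply/forallP => T; apply/implyP; apply: pr.
by apply/forallP => x; apply/implyP => xS; rewrite sp // inE negbK.
Qed.

Lemma facet_above A : A \in C -> exists2 F, facet C F & A \subset F.
Proof.
move=> AC; have [F /maxsetP [/andP [FC AF] maxF]] :=
  @ex_maxset _ (fun B => (B \in C) && (A \subset B))
    (ex_intro _ A (introT andP (conj AC (subxx _)))).
exists F => //; split => // G GC FG; apply: maxF => //.
by rewrite GC (subset_trans AF FG).
Qed.

Lemma ker_AC_eq0 (w : bvec n -> R) : in_ker_AC C w ->
  (forall k, ones k \notin C -> w k = 0) -> forall k, w k = 0.
Proof.
move=> wker w_nonface.
suff: forall d k, (n - #|ones k| < d)%N -> w k = 0 by move=> h k; exact: (h _ k).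
elim=> [//|d IH] k hk.
case kC: (ones k \in C); last by apply: w_nonface; rewrite kC.
have [F fF kF] := facet_above kC.
have supp : supported_on F k.
  by move=> x xF; apply/negbTE/negP => kx; case/negP: xF; apply: (subsetP kF); rewrite inE.
have := wker F k fF supp; rewrite (bigD1 k) //= big1 ?addr0.
  by rewrite /AC_entry (_ : [forall x in F, _] = true) ?mul1r //; apply/forall_inP.
move=> k' k'k; rewrite /AC_entry; case: ifP => [/forall_inP agreeF|]; last by rewrite mul0r.
rewrite mul1r; apply: IH.
have : ones k \proper ones k'.
  rewrite properEneq (inj_eq ones_inj) eq_sym k'k /=.
  apply/subsetP => x; rewrite !inE => kx.
  by rewrite -(eqP (agreeF x _)) // (subsetP kF) ?inE.
move/proper_card; have := max_card (ones k'); rewrite card_ord; lia.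
Qed.

Definition nonface_below k T := (T \subset ones k) && (T \notin C).

Definition min_nonface_below k : {set 'I_n} :=
  odflt set0 [pick T | minset (nonface_below k) T].

Lemma min_nonface_belowP k :
  ones k \notin C -> minset (nonface_below k) (min_nonface_below k).
Proof.
move=> kC; rewrite /min_nonface_below; case: pickP => [T // | none] /=.
have [T minT] := @ex_minset _ (nonface_below k)
  (ex_intro _ (ones k) (introT andP (conj (subxx _) kC))).
by have := none T; rewrite minT.
Qed.

Definition gen_at k := (min_nonface_below k,
  [ffun x => (x \notin min_nonface_below k) && k x]).

Lemma gen_at_idx k : ones k \notin C -> gen_idx C (gen_at k).
Proof.
move=> /min_nonface_belowP /minsetP [/andP [Sk SC] minS].
split; last by move=> x; rewrite inE negbK ffunE => ->.
split => // T pT; apply/negPn/negP => TC; have /andP [TS _] := pT.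
have := minS T; rewrite /nonface_below TC (subset_trans TS Sk) => /(_ isT TS) eTS.
by move: pT; rewrite eTS properxx.
Qed.

Lemma Kvec_gen_at k k' : ones k \notin C -> (#|ones k| <= #|ones k'|)%N ->
  Kvec R (gen_at k).1 (gen_at k).2 k' =
  if k' == k then (-1) ^+ #|min_nonface_below k| else 0.
Proof.
move=> kC kk'; have /minsetp /andP [Sk _] := min_nonface_belowP kC.
rewrite KvecE /=; case: ifP => [/forallP agree|]; last first.
  case: eqP => // -> /negP []; apply/forallP => x; apply/implyP => xS.
  by rewrite ffunE xS.
case: eqP => [->|/eqP k'k]; first by rewrite (setIidPl Sk).
suff : ones k' \subset ones k.
  by move=> sub; case/negP: k'k; rewrite -(inj_eq ones_inj) eqEcard sub kk'.
apply/subsetP => x; rewrite inE => k'x.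
case xS: (x \in min_nonface_below k); first exact: (subsetP Sk).
by have := agree x; rewrite inE ffunE xS k'x /= => /eqP <-.
Qed.

Definition K_comb (c : {set 'I_n} * bvec n -> R) k :=
  \sum_(g | gen_idxb C g) c g * Kvec R g.1 g.2 k.

Lemma K_comb_on_nonfaces (v : bvec n -> R) :
  exists c, forall k, ones k \notin C -> v k = K_comb c k.
Proof.
suff: forall m v, (forall k, (m <= #|ones k|)%N -> ones k \notin C -> v k = 0) ->
    exists c, forall k, ones k \notin C -> v k = K_comb c k.
  move/(_ n.+1 v); apply=> k; have := max_card (ones k); rewrite card_ord; lia.
elim=> [|m IH] {}v vm.
  by exists (fun=> 0) => k kC; rewrite vm // /K_comb big1 // => g _; rewrite mul0r.
pose P k := (#|ones k| == m) && (ones k \notin C).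
pose sgn k : R := (-1) ^+ #|min_nonface_below k|.
pose c1 g := \sum_(k | P k && (gen_at k == g)) v k * sgn k.
have c1E k' : K_comb c1 k' =
    \sum_(k | P k) v k * sgn k * Kvec R (gen_at k).1 (gen_at k).2 k'.
  rewrite /K_comb [RHS](partition_big gen_at (gen_idxb C)); last first.
    by move=> k /andP [_ kC]; apply/gen_idxP/gen_at_idx.
  by apply: eq_bigr => g _; rewrite big_distrl; apply: eq_bigr => k /andP [_ /eqP ->].
have [c2 c2E] : exists c2, forall k, ones k \notin C -> v k - K_comb c1 k = K_comb c2 k.
  apply: IH => k' mk' k'C; rewrite c1E.
  have Kdelta k : P k -> Kvec R (gen_at k).1 (gen_at k).2 k' = if k' == k then sgn k else 0.
    by case/andP => /eqP km kC; apply: Kvec_gen_at; rewrite ?km.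
  rewrite (eq_bigr _ (fun k Pk => congr1 _ (Kdelta k Pk))).
  case Pk': (P k').
    rewrite (bigD1 k') //= eqxx -mulrA -expr2 sqrr_sign mulr1 big1 ?addr0 ?subrr //.
    by move=> k /andP [_ /negbTE]; rewrite eq_sym => ->; rewrite mulr0.
  rewrite big1 ?subr0; last first.
    by move=> k Pk; case: eqP => [eqk|_]; [rewrite -eqk Pk' in Pk | rewrite mulr0].
  by apply: vm => //; move: Pk'; rewrite /P k'C andbT; lia.
exists (fun g => c1 g + c2 g) => k kC.
rewrite -(subrK (K_comb c1 k) (v k)) c2E // /K_comb -big_split /=.
by apply: eq_bigr => g _; rewrite mulrDl addrC.
Qed.

Lemma ker_AC_spanned_by_K (v : bvec n -> R) : simplicial_complex C ->
  in_ker_AC C v -> exists c, forall k, v k = K_comb c k.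
Proof.
move=> sc vker; have [c cE] := K_comb_on_nonfaces v; exists c.
suff diff0 : forall k, v k - K_comb c k = 0 by move=> k; apply/eqP; rewrite -subr_eq0 diff0.
apply: ker_AC_eq0 => [|k kC]; last by rewrite cE ?subrr.
apply: in_ker_AC_sub vker (in_ker_AC_comb _ _) => g /gen_idxP [[SC _] _].
exact: Kvec_in_ker.
Qed.

End Cube.

Theorem proposition3p6 (R : realFieldType) (n : nat) (C : {set {set 'I_n}}) :
  simplicial_complex C ->
  (* K spans ker(A_C): every element of K lies in the kernel ... *)
  ((forall g : {set 'I_n} * {ffun 'I_n -> bool}, gen_idx C g ->
      in_ker_AC C (Kvec R g.1 g.2)) /\
   (* ... and every kernel vector is a linear combination of elements of K *)
   (forall v : {ffun 'I_n -> bool} -> R, in_ker_AC C v ->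
      exists c : {set 'I_n} * {ffun 'I_n -> bool} -> R,
        forall k, v k = \sum_(g | gen_idxb C g) c g * Kvec R g.1 g.2 k)) /\
  (* sign-flipping rows (indexed by k) and columns (indexed by (S,i)) of M' gives M *)
  (exists (rs : {ffun 'I_n -> bool} -> bool)
          (cs : {set 'I_n} * {ffun 'I_n -> bool} -> bool),
      forall (g : {set 'I_n} * {ffun 'I_n -> bool}) (k : {ffun 'I_n -> bool}),
        gen_idx C g ->
        (-1) ^+ rs k * (-1) ^+ cs g * Kvec R g.1 g.2 k = Mvec R g.1 g.2 k).
Proof.
move=> sc; split; [split|].
- by move=> g [[SC _] _]; apply: Kvec_in_ker.
- by move=> v vker; apply: ker_AC_spanned_by_K.
- exists (fun k => odd #|ones k|), (fun g => odd #|ones g.2|) => g k [_ iS].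
  exact: Kvec_sign_flip.
Qed.
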